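(* Let $\phi:L_r(\mathbb{C}h)\to\mathbb{C}$ be a linear function and let $L_\phi$ be the unique irreducible quotient $L_r(\mathfrak{sl}_2)$-module of $U(\phi)$. Then $L_\phi$ is an integrable $L_r(\mathfrak{sl}_2)$-module if and only if $\dim L_\phi<\infty$.
   Context: Let $\{e,f,h\}$ be the standard basis of $\mathfrak{sl}_2$, $L_r=\mathbb{C}[t_1^{\pm1},\dots,t_r^{\pm1}]$ ($r\ge1$), and for a subspace $\mathfrak{a}\subset\mathfrak{sl}_2$ let $L_r(\mathfrak{a})=\mathfrak{a}\otimes L_r$; $L_r(\mathfrak{sl}_2)$ has bracket $[u\otimes p,v\otimes q]=[u,v]\otimes pq$. Given a linear $\phi:L_r(\mathbb{C}h)\to\mathbb{C}$, let $\mathbb{C}_\phi=\mathbb{C}$ be the one-dimensional $L_r(\mathbb{C}e\oplus\mathbb{C}h)$-module with $(h\otimes\mathbf{t}^{\mathbf{m}})\cdot1=\phi(h\otimes\mathbf{t}^{\mathbf{m}})1$, $(e\otimes\mathbf{t}^{\mathbf{m}})\cdot1=0$, and $U(\phi)=U(L_r(\mathfrak{sl}_2))\otimes_{U(L_r(\mathbb{C}e\oplus\mathbb{C}h))}\mathbb{C}_\phi$; it has a unique maximal submodule, and $L_\phi$ is the quotient. An $L_r(\mathfrak{sl}_2)$-module is integrable if $h$ acts semisimply and $e\otimes p$, $f\otimes p$ act locally nilpotently for all $p\in L_r$. *)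

From HB Require Import structures.
From mathcomp Require Import all_boot all_order all_algebra.
From mathcomp Require Import complex.
From mathcomp Require Import reals.
Set Implicit Arguments. Unset Strict Implicit. Unset Printing Implicit Defensive.
Import Order.TTheory GRing.Theory Num.Theory.
Local Open Scope ring_scope.

(* Monomials t^m of L_r = C[t_1^{±1},...,t_r^{±1}] are indexed by m : 'rV[int]_r.
   A basis of L_r(sl2) is { x ⊗ t^m | x ∈ {e,f,h}, m ∈ Z^r }.
   An L_r(sl2)-module structure on a C-vector space V is given by the linear
   operators E m, F m, H m (the actions of e⊗t^m, f⊗t^m, h⊗t^m), subject to the
   bracket relations of L_r(sl2) ([h,e]=2e, [h,f]=-2f, [e,f]=h). *)

Section LoopSl2.
Variables (R : realType) (r : nat) (V : lmodType R[i]).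

Definition op_comm (A B : V -> V) (v : V) : V := A (B v) - B (A v).

Definition op_linear (A : V -> V) : Prop :=
  forall (a : R[i]) (u w : V), A (a *: u + w) = a *: A u + A w.

Definition is_loop_sl2_module (E F H : 'rV[int]_r -> V -> V) : Prop :=
  (forall m, op_linear (E m)) /\ (forall m, op_linear (F m)) /\
  (forall m, op_linear (H m)) /\
  (forall m n v, op_comm (E m) (F n) v = H (m + n) v) /\
  (forall m n v, op_comm (H m) (E n) v = 2%:R *: E (m + n) v) /\
  (forall m n v, op_comm (H m) (F n) v = - (2%:R *: F (m + n) v)) /\
  (forall m n v, op_comm (E m) (E n) v = 0) /\
  (forall m n v, op_comm (F m) (F n) v = 0) /\
  (forall m n v, op_comm (H m) (H n) v = 0).

(* A Laurent polynomial p = \sum_{(c,m) in s} c t^m is given by a finite list s;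
   act A s is the action of x ⊗ p when A m is the action of x ⊗ t^m. *)
Definition act (A : 'rV[int]_r -> V -> V) (s : seq (R[i] * 'rV[int]_r)) (v : V) : V :=
  \sum_(cm <- s) cm.1 *: A cm.2 v.

Definition is_submodule (E F H : 'rV[int]_r -> V -> V) (P : V -> Prop) : Prop :=
  [/\ P 0, (forall u w, P u -> P w -> P (u + w)),
      (forall (a : R[i]) u, P u -> P (a *: u)) &
      (forall m u, P u -> [/\ P (E m u), P (F m u) & P (H m u)])].

Definition is_irreducible (E F H : 'rV[int]_r -> V -> V) : Prop :=
  (exists v : V, v != 0) /\
  forall P, is_submodule E F H P -> (forall v, P v -> v = 0) \/ (forall v, P v).

(* highest weight vector of weight phi : the linear functional on L_r(Ch)
   determined by its values phi m = phi(h ⊗ t^m) on the basis *)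
Definition is_hw_vector (E H : 'rV[int]_r -> V -> V) (phi : 'rV[int]_r -> R[i])
  (v : V) : Prop :=
  v != 0 /\ forall m, E m v = 0 /\ H m v = phi m *: v.

Definition locally_nilpotent (A : V -> V) : Prop :=
  forall v, exists n : nat, iter n A v = 0.

(* h = h ⊗ 1 acts semisimply: V is spanned by eigenvectors of H 0 *)
Definition acts_semisimply (A : V -> V) : Prop :=
  forall v, exists s : seq (R[i] * V),
    v = \sum_(x <- s) x.2 /\ all (fun x => A x.2 == x.1 *: x.2) s.

Definition is_integrable (E F H : 'rV[int]_r -> V -> V) : Prop :=
  [/\ acts_semisimply (H 0),
      (forall s, locally_nilpotent (act E s)) &
      (forall s, locally_nilpotent (act F s))].

Definition finite_dim : Prop :=
  exists s : seq V, forall v, exists c : 'I_(size s) -> R[i],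
    v = \sum_(i < size s) c i *: s`_i.

End LoopSl2.

From mathcomp Require Import all_boot all_algebra.
From mathcomp Require Import complex reals ring zify.
Import GRing.Theory Num.Theory.
Set Implicit Arguments. Unset Strict Implicit. Unset Printing Implicit Defensive.
Local Open Scope ring_scope.

(* Let v be a highest weight vector of weight phi.  By irreducibility V is
   spanned by the words F(m_1) ... F(m_k) v; such a word has H(0)-weight
   phi(0) - 2k and E(m) shortens it.  If V is finite dimensional, only
   finitely many weights occur, so long words vanish: this makes F locally
   nilpotent, E always is, and the words diagonalise H(0).
   Conversely, suppose F(0)^(n+1) v = 0.  Expanding E(d)^n F(0)^(n+1) v = 0
   and looking at the terms of top degree in d shows that F(n d) v is a
   combination of the F(i d) v, i < n, because the leading coefficient is
   (-2)^n N with N > 0.  Applying H(a) - phi(a) translates this relation to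
   F(a + n d) v, so every F(m) v lies in the span of the F(c) v with c in the
   box [-n, n)^r.  As the F(c) commute and are nilpotent on v, finitely many
   words then span V. *)

Section Span.
Variables (K : pzRingType) (V : lmodType K).
Implicit Types (P Q : V -> Prop) (x y : V).

Definition in_span P x : Prop :=
  exists s : seq (K * V), (forall e, e \in s -> P e.2) /\ x = \sum_(e <- s) e.1 *: e.2.

Lemma in_span0 P : in_span P 0.
Proof. by exists [::]; split => //; rewrite big_nil. Qed.

Lemma in_span_gen P x : P x -> in_span P x.
Proof.
move=> Px; exists [:: (1, x)]; split; first by move=> e; rewrite inE => /eqP ->.
by rewrite big_seq1 scale1r.
Qed.

Lemma in_spanD P x y : in_span P x -> in_span P y -> in_span P (x + y).
Proof.
move=> [s [Ps ->]] [t [Pt ->]]; exists (s ++ t); split; last by rewrite big_cat.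
by move=> e; rewrite mem_cat => /orP [] ?; [apply: Ps | apply: Pt].
Qed.

Lemma in_spanZ P a x : in_span P x -> in_span P (a *: x).
Proof.
move=> [s [Ps ->]]; exists [seq (a * e.1, e.2) | e <- s]; split.
  by move=> e /mapP [f fs ->] /=; apply: Ps.
by rewrite big_map scaler_sumr; apply: eq_bigr => e _; rewrite scalerA.
Qed.

Lemma in_spanN P x : in_span P x -> in_span P (- x).
Proof. by move=> /(in_spanZ (-1)); rewrite scaleN1r. Qed.

Lemma in_spanB P x y : in_span P x -> in_span P y -> in_span P (x - y).
Proof. by move=> Px Py; apply: in_spanD Px (in_spanN Py). Qed.

Lemma in_span_sum P (I : eqType) (s : seq I) (f : I -> V) :
  (forall i, i \in s -> in_span P (f i)) -> in_span P (\sum_(i <- s) f i).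
Proof.
elim: s => [|a s IH] Pf; first by rewrite big_nil; apply: in_span0.
rewrite big_cons; apply: in_spanD; first by apply: Pf; rewrite mem_head.
by apply: IH => i si; apply: Pf; rewrite inE si orbT.
Qed.

Lemma in_span_trans P Q x : (forall y, P y -> in_span Q y) -> in_span P x -> in_span Q x.
Proof.
move=> PQ [s [Ps ->]]; apply: in_span_sum => e es; apply: in_spanZ; exact: PQ (Ps _ es).
Qed.

Lemma in_span_sub P Q x : (forall y, P y -> Q y) -> in_span P x -> in_span Q x.
Proof. by move=> PQ; apply: in_span_trans => y /PQ; apply: in_span_gen. Qed.

Lemma in_span_eq0 P x : (forall y, P y -> y = 0) -> in_span P x -> x = 0.
Proof.
move=> P0 [s [Ps ->]]; rewrite big_seq big1 // => e es.
by rewrite (P0 _ (Ps _ es)) scaler0.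
Qed.

Lemma in_span_seq (t : seq V) x : in_span (fun y => y \in t) x ->
  exists c : 'I_(size t) -> K, x = \sum_(i < size t) c i *: t`_i.
Proof.
move=> [s [Ps ->]]; elim: s Ps => [|e s IH] Ps.
  by exists (fun _ => 0); rewrite big_nil big1 // => i _; rewrite scale0r.
rewrite big_cons; have [c ->] : exists c : 'I_(size t) -> K,
    \sum_(e <- s) e.1 *: e.2 = \sum_(i < size t) c i *: t`_i.
  by apply: IH => f fs; apply: Ps; rewrite inE fs orbT.
have et : (index e.2 t < size t)%N by rewrite index_mem; apply: Ps; rewrite mem_head.
exists (fun i : 'I_(size t) => (if (i : nat) == index e.2 t then e.1 else 0) + c i).
under [RHS]eq_bigr do rewrite scalerDl.
rewrite big_split /=; congr (_ + _).
rewrite (bigD1 (Ordinal et)) //= eqxx nth_index ?Ps ?mem_head //.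
rewrite big1 ?addr0 // => i /negbTE; rewrite -val_eqE /= => ->.
by rewrite scale0r.
Qed.

End Span.

Section OpLinear.
Variables (R : realType) (V : lmodType R[i]).
Implicit Types (A : V -> V) (x y : V).

Lemma op_linearD A : op_linear A -> forall x y, A (x + y) = A x + A y.
Proof. by move=> linA x y; have := linA 1 x y; rewrite !scale1r. Qed.

Lemma op_linear0 A : op_linear A -> A 0 = 0.
Proof.
move=> linA; have /eqP := op_linearD linA 0 0.
by rewrite addr0 -subr_eq subrr eq_sym => /eqP.
Qed.

Lemma op_linearZ A : op_linear A -> forall a x, A (a *: x) = a *: A x.
Proof. by move=> linA a x; rewrite -[a *: x]addr0 linA op_linear0 // addr0. Qed.

Lemma op_linear_sum A (I : Type) (s : seq I) (f : I -> V) :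
  op_linear A -> A (\sum_(i <- s) f i) = \sum_(i <- s) A (f i).
Proof.
move=> linA; elim: s => [|a s IH]; first by rewrite !big_nil op_linear0.
by rewrite !big_cons op_linearD // IH.
Qed.

Lemma op_linear_iter A n : op_linear A -> op_linear (iter n A).
Proof. by move=> linA; elim: n => [|n IH] a u w //=; rewrite IH linA. Qed.

Lemma op_linear_in_span A P Q x : op_linear A ->
  (forall y, P y -> in_span Q (A y)) -> in_span P x -> in_span Q (A x).
Proof.
move=> linA PQ [s [Ps ->]]; rewrite op_linear_sum //; apply: in_span_sum => e es.
by rewrite op_linearZ //; apply: in_spanZ; exact: PQ (Ps _ es).
Qed.

Lemma nilpotent_in_span A P x : op_linear A ->
  (forall y, P y -> exists n, iter n A y = 0) ->
  in_span P x -> exists n, iter n A x = 0.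
Proof.
move=> linA nilA [s [Ps ->]]; elim: s Ps => [|e s IH] Ps.
  by exists 0%N; rewrite big_nil.
have [n1 n1P] := nilA _ (Ps e (mem_head _ _)).
have [n2 n2P] : exists n, iter n A (\sum_(e <- s) e.1 *: e.2) = 0.
  by apply: IH => f fs; apply: Ps; rewrite inE fs orbT.
have linAn k : op_linear (iter k A) by exact: op_linear_iter.
exists (n2 + n1)%N; rewrite big_cons op_linearD // op_linearZ // iterD n1P.
by rewrite op_linear0 // scaler0 add0r addnC iterD n2P op_linear0.
Qed.

Variable r : nat.
Implicit Types (G : 'rV[int]_r -> V -> V) (s : seq (R[i] * 'rV[int]_r)).

Lemma op_linear_act G s : (forall m, op_linear (G m)) -> op_linear (act G s).
Proof.
move=> linG a u w; rewrite /act scaler_sumr -big_split; apply: eq_bigr => cm _ /=.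
by rewrite linG scalerDr !scalerA mulrC.
Qed.

Lemma act_in_span G s Q y : (forall m, in_span Q (G m y)) -> in_span Q (act G s y).
Proof. by move=> GQ; apply: in_span_sum => cm _; apply: in_spanZ. Qed.

End OpLinear.

Section HighestWeight.
Variables (R : realType) (r : nat) (V : lmodType R[i]).
Local Notation C := R[i].
Local Notation mode := 'rV[int]_r.
Variables (E F H : mode -> V -> V) (phi : mode -> C) (v : V).
Hypotheses (linE : forall m, op_linear (E m)) (linF : forall m, op_linear (F m))
  (linH : forall m, op_linear (H m))
  (commEF : forall m n x, op_comm (E m) (F n) x = H (m + n) x)
  (commHF : forall m n x, op_comm (H m) (F n) x = - (2%:R *: F (m + n) x))
  (commFF : forall m n x, op_comm (F m) (F n) x = 0)
  (Ev : forall m, E m v = 0) (Hv : forall m, H m v = phi m *: v).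

Lemma HF_swap m n x : H m (F n x) = F n (H m x) - 2%:R *: F (m + n) x.
Proof. by rewrite -(commHF m n x) /op_comm addrC subrK. Qed.

Lemma EF_swap m n x : E m (F n x) = H (m + n) x + F n (E m x).
Proof. by rewrite -(commEF m n x) /op_comm subrK. Qed.

Lemma FF_swap m n x : F m (F n x) = F n (F m x).
Proof. by apply/eqP; rewrite -subr_eq0; apply/eqP; exact: commFF. Qed.

Definition Fprod (l : seq mode) (x : V) : V := foldr F x l.
Definition word l := Fprod l v.
Definition is_word y := exists l, y = word l.
Definition is_word_len k y := exists l, size l = k /\ y = word l.
Definition is_word_len_in (Ks : seq nat) y := exists l, size l \in Ks /\ y = word l.

Lemma op_linear_Fprod l : op_linear (Fprod l).
Proof. by elim: l => [|m l IH] a u w //=; rewrite IH linF. Qed.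

Lemma F_word_len m k x : in_span (is_word_len k) x -> in_span (is_word_len k.+1) (F m x).
Proof.
apply: op_linear_in_span => // y [l [<- ->]].
by apply: in_span_gen; exists (m :: l).
Qed.

Lemma H_word a l : in_span (is_word_len (size l)) (H a (word l)).
Proof.
elim: l => [|m l IH] /=.
  by rewrite /word /= Hv; apply/in_spanZ/in_span_gen; exists [::].
rewrite HF_swap; apply: in_spanB; first exact: F_word_len.
by apply/in_spanZ/in_span_gen; exists (a + m :: l).
Qed.

Lemma E_word a l : in_span (is_word_len (size l).-1) (E a (word l)).
Proof.
elim: l => [|m l IH] /=; first by rewrite /word /= Ev; apply: in_span0.
rewrite EF_swap; apply: in_spanD; first exact: H_word.
case: l IH => [|m' l] IH; last exact: F_word_len.
by rewrite /word /= Ev (op_linear0 (linF m)); apply: in_span0.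
Qed.

Definition weight (k : nat) : C := phi 0 - 2%:R * k%:R.

Lemma H0_word l : H 0 (word l) = weight (size l) *: word l.
Proof.
elim: l => [|m l IH]; first by rewrite /word /= Hv /weight mulr0 subr0.
rewrite /word /= HF_swap -/(word l) IH add0r (op_linearZ (linF m)) -scalerBl.
by congr (_ *: _); rewrite /weight /= -[(size l).+1]/(1 + size l)%N natrD; ring.
Qed.

Lemma iter_E_word_len s k y : in_span (is_word_len k) y -> iter k.+1 (act E s) y = 0.
Proof.
elim: k y => [|k IH] y Py.
  apply: (in_span_eq0 (P := fun z => z = 0)) => //.
  apply: op_linear_in_span Py; first exact: op_linear_act.
  move=> z [l [/size0nil -> ->]]; apply: act_in_span => m.
  by rewrite /word /= Ev; apply: in_span_gen.
rewrite iterSr; apply: IH; apply: op_linear_in_span Py; first exact: op_linear_act.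
move=> z [l [lk ->]]; apply: act_in_span => m; rewrite -[k]/(k.+1.-1) -lk; exact: E_word.
Qed.

Definition weight_annihilator (Ks : seq nat) : V -> V :=
  foldr (fun j A x => H 0 (A x) - weight j *: A x) id Ks.

Lemma op_linear_weight_annihilator Ks : op_linear (weight_annihilator Ks).
Proof.
elim: Ks => [|j Ks IH] a u w //=.
by rewrite IH linH scalerDr scalerBr !scalerA (mulrC (weight j)) opprD addrACA.
Qed.

Lemma weight_annihilator_word Ks l : weight_annihilator Ks (word l) =
  (\prod_(j <- Ks) (weight (size l) - weight j)) *: word l.
Proof.
elim: Ks => [|j Ks IH]; first by rewrite big_nil scale1r.
rewrite /= IH (op_linearZ (linH 0)) H0_word big_cons !scalerA -scalerBl.
by congr (_ *: _); ring.
Qed.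

Lemma weight_inj j k : j <> k -> weight k - weight j != 0.
Proof.
move=> jk; have two_neq0 : (2%:R : C) != 0 by rewrite pnatr_eq0.
rewrite subr_eq0 /weight; apply/eqP => /addrI /oppr_inj /(mulfI two_neq0) /eqP.
by rewrite eqr_nat => /eqP kj; apply: jk.
Qed.

Lemma iter_F_word_len s n k y :
  in_span (is_word_len k) y -> in_span (is_word_len (k + n)) (iter n (act F s) y).
Proof.
elim: n => [|n IH] Py; first by rewrite addn0.
rewrite addnS /=; apply: op_linear_in_span (IH Py); first exact: op_linear_act.
by move=> z Pz; apply: act_in_span => m; apply/F_word_len/in_span_gen.
Qed.

Section LeadingTerm.
Variable d : mode.

(* A formal combination [s] stands for the vector [dcomb s]; the degree of the
   term (c, [:: k_1; ...; k_L]) is k_1 + ... + k_L. *)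
Definition dword (w : seq nat) := word [seq d *+ k | k <- w].
Definition dcomb (s : seq (C * seq nat)) := \sum_(e <- s) e.1 *: dword e.2.

(* Expansions of H(a d) and E(d) applied to [dword w], obtained by commuting
   them to the right through the F's. *)
Fixpoint H_expand (a : nat) (w : seq nat) : seq (C * seq nat) :=
  if w is k :: w' then
    (- 2%:R, (a + k)%N :: w') :: [seq (e.1, k :: e.2) | e <- H_expand a w']
  else [:: (phi (d *+ a), [::])].

Fixpoint E_expand (w : seq nat) : seq (C * seq nat) :=
  if w is k :: w' then H_expand k.+1 w' ++ [seq (e.1, k :: e.2) | e <- E_expand w']
  else [::].

Definition E_expand_comb (s : seq (C * seq nat)) : seq (C * seq nat) :=
  flatten [seq [seq (e.1 * f.1, f.2) | f <- E_expand e.2] | e <- s].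

Lemma dcomb_cat s t : dcomb (s ++ t) = dcomb s + dcomb t.
Proof. by rewrite /dcomb big_cat. Qed.

Lemma dcomb_F k s : dcomb [seq (e.1, k :: e.2) | e <- s] = F (d *+ k) (dcomb s).
Proof.
rewrite /dcomb big_map (op_linear_sum _ _ (linF _)); apply: eq_bigr => e _.
by rewrite (op_linearZ (linF _)).
Qed.

Lemma dcomb_scale c s : dcomb [seq (c * f.1, f.2) | f <- s] = c *: dcomb s.
Proof.
by rewrite /dcomb big_map scaler_sumr; apply: eq_bigr => e _; rewrite scalerA.
Qed.

Lemma dcomb_H_expand a w : dcomb (H_expand a w) = H (d *+ a) (dword w).
Proof.
elim: w => [|k w IH]; first by rewrite /dcomb big_seq1 /dword /word /= Hv.
rewrite /= /dcomb big_cons -/(dcomb _) dcomb_F IH HF_swap -mulrnDr.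
by rewrite scaleNr addrC.
Qed.

Lemma dcomb_E_expand w : dcomb (E_expand w) = E d (dword w).
Proof.
elim: w => [|k w IH]; first by rewrite /dcomb big_nil /dword /word /= Ev.
by rewrite /= dcomb_cat dcomb_H_expand dcomb_F IH EF_swap -mulrS.
Qed.

Lemma dcomb_E_expand_comb s : dcomb (E_expand_comb s) = E d (dcomb s).
Proof.
elim: s => [|e s IH]; first by rewrite /dcomb !big_nil (op_linear0 (linE d)).
rewrite /E_expand_comb /= dcomb_cat -/(E_expand_comb s) IH dcomb_scale.
by rewrite dcomb_E_expand /dcomb big_cons (op_linearD (linE d)) (op_linearZ (linE d)).
Qed.

Lemma dcomb_iter_E_expand_comb n s :
  dcomb (iter n E_expand_comb s) = iter n (E d) (dcomb s).
Proof. by elim: n => //= n IH; rewrite dcomb_E_expand_comb IH. Qed.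

Definition top_coef k (c : C) := exists N, (0 < N)%N /\ c = (- 2%:R) ^+ k * N%:R.

Definition leading_inv k L (s : seq (C * seq nat)) :=
  (forall e, e \in s ->
    [/\ size e.2 = L, (sumn e.2 <= k)%N & (sumn e.2 = k -> top_coef k e.1)])
  /\ (exists2 e, e \in s & sumn e.2 = k).

Lemma H_expand_mem a w f : f \in H_expand a w -> size f.2 = size w /\
  (sumn f.2 = sumn w \/ (sumn f.2 = (a + sumn w)%N /\ f.1 = - 2%:R)).
Proof.
elim: w f => [|k w IH] f /=; first by rewrite inE => /eqP -> /=; split => //; left.
rewrite inE => /orP [/eqP -> /=|/mapP [g gH ->] /=].
  by split => //; right; split => //; rewrite addnA.
have [-> [->|[-> ->]]] := IH g gH; split => //; first by left.
by right; split => //; rewrite addnCA.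
Qed.

Lemma H_expand_top a w : w != [::] ->
  exists2 f, f \in H_expand a w & sumn f.2 = (a + sumn w)%N.
Proof.
case: w => [//|k w] _; exists (- 2%:R, (a + k)%N :: w); first by rewrite mem_head.
by rewrite /= addnA.
Qed.

Lemma E_expand_mem w f : f \in E_expand w -> [/\ size f.2 = (size w).-1,
  (sumn f.2 <= (sumn w).+1)%N & (sumn f.2 = (sumn w).+1 -> f.1 = - 2%:R)].
Proof.
elim: w f => [//|k w IH] f /=; rewrite mem_cat => /orP [fH|/mapP [g gE ->] /=].
  by have [-> [->|[-> ->]]] := H_expand_mem fH; split => //; lia.
case: w IH gE => [//|k' w] IH gE.
have [gsize gsum gtop] := IH g gE; rewrite /= in gsize gsum gtop *.
by split; [rewrite gsize | lia | move=> ?; apply: gtop; lia].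
Qed.

Lemma E_expand_top w : (1 < size w)%N ->
  exists2 f, f \in E_expand w & sumn f.2 = (sumn w).+1.
Proof.
case: w => [//|k [//|k' w]] _.
have [f fH fsum] := H_expand_top k.+1 (w := k' :: w) isT.
by exists f; [rewrite mem_cat fH | rewrite fsum].
Qed.

Lemma E_expand_combP s f' : f' \in E_expand_comb s ->
  exists e f, [/\ e \in s, f \in E_expand e.2 & f' = (e.1 * f.1, f.2)].
Proof.
elim: s => [//|e s IH]; rewrite /E_expand_comb /= mem_cat -/(E_expand_comb s).
case/orP => [/mapP [f fE ->]|/IH [e' [f [e's fE ->]]]].
  by exists e, f; rewrite mem_head.
by exists e', f; rewrite inE e's orbT.
Qed.

Lemma mem_E_expand_comb s e f :
  e \in s -> f \in E_expand e.2 -> (e.1 * f.1, f.2) \in E_expand_comb s.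
Proof.
elim: s => [//|e' s IH]; rewrite inE /E_expand_comb /= mem_cat -/(E_expand_comb s).
case/orP => [/eqP <- fE|es fE]; last by rewrite IH ?orbT.
by rewrite (map_f (fun f => (e.1 * f.1, f.2)) fE).
Qed.

Lemma E_expand_comb_inv k L s :
  (0 < L)%N -> leading_inv k L.+1 s -> leading_inv k.+1 L (E_expand_comb s).
Proof.
move=> L0 [sP [e0 e0s e0sum]]; split.
  move=> f' /E_expand_combP [e [f [es fE ->]]] /=.
  have [esize esum etop] := sP e es.
  have [fsize fsum ftop] := E_expand_mem fE.
  split; [by rewrite fsize esize | exact: leq_trans fsum _ |] => fk.
  have ek : sumn e.2 = k by apply/eqP; rewrite eqn_leq esum -ltnS -fk.
  have [N [N0 ->]] := etop ek; exists N; split => //.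
  by rewrite ftop ?fk ?ek // exprSr mulrAC.
have [f fE fsum] : exists2 f, f \in E_expand e0.2 & sumn f.2 = (sumn e0.2).+1.
  by apply: E_expand_top; have [-> _ _] := sP e0 e0s.
by exists (e0.1 * f.1, f.2); [exact: mem_E_expand_comb | rewrite /= fsum e0sum].
Qed.

Lemma iter_E_expand_comb_inv n i : (i <= n)%N ->
  leading_inv i (n - i).+1 (iter i E_expand_comb [:: (1, nseq n.+1 0%N)]).
Proof.
have sumn_nseq0 k : sumn (nseq k 0%N) = 0%N by elim: k.
elim: i => [|i IH] lein.
  rewrite subn0; split; last by exists (1, nseq n.+1 0%N); rewrite ?mem_head ?sumn_nseq0.
  move=> e; rewrite inE => /eqP -> /=; rewrite size_nseq sumn_nseq0.
  by split => // _; exists 1%N; rewrite expr0 mul1r.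
rewrite iterS; apply: E_expand_comb_inv; first by [].
by rewrite -subSn // subSS; apply: IH; apply: ltnW.
Qed.

Definition is_lower_multiple n y := exists i, (i < n)%N /\ y = F (d *+ i) v.

Lemma leading_term_span n s :
  (forall e, e \in s ->
    [/\ size e.2 = 1%N, (sumn e.2 <= n)%N & (sumn e.2 = n -> top_coef n e.1)]) ->
  exists N : nat, ((exists2 e, e \in s & sumn e.2 = n) -> (0 < N)%N) /\
    in_span (is_lower_multiple n) (dcomb s - ((- 2%:R) ^+ n * N%:R) *: F (d *+ n) v).
Proof.
elim: s => [|e s IH] sP.
  exists 0%N; split; first by case.
  by rewrite /dcomb big_nil mulr0 scale0r subr0; apply: in_span0.
have [N' [N'pos N'span]] := IH (fun f fs => sP f (@mem_behead _ (e :: s) f fs)).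
have [esize esum etop] := sP e (mem_head _ _).
case: e {sP} esize esum etop => c [//|k [|//]] _ /=; rewrite addn0 => kn ktop.
rewrite /dcomb big_cons -/(dcomb s) /= (_ : dword [:: k] = F (d *+ k) v) //.
have [kn_eq|kn_neq] := eqVneq k n.
  have [Nk [Nk0 ->]] := ktop kn_eq.
  exists (Nk + N')%N; split; first by rewrite addn_gt0 Nk0.
  by rewrite kn_eq natrD mulrDr scalerDl (addrC (_ *: _)) addrKA.
exists N'; split.
  case=> f; rewrite inE => /orP [/eqP -> /=|fs fn]; last by apply: N'pos; exists f.
  by rewrite addn0 => /eqP; rewrite (negbTE kn_neq).
rewrite -addrA; apply/in_spanD/N'span; apply/in_spanZ/in_span_gen.
by exists k; rewrite ltn_neqAle kn_neq kn.
Qed.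

Lemma F_multiple_relation n : iter n.+1 (F 0) v = 0 ->
  in_span (is_lower_multiple n) (F (d *+ n) v).
Proof.
move=> F0nil.
have [sP [e0 e0s e0sum]] := iter_E_expand_comb_inv (leqnn n); rewrite subnn in sP.
set s := iter n E_expand_comb _ in sP e0s.
have s0 : dcomb s = 0.
  rewrite dcomb_iter_E_expand_comb; have -> : dcomb [:: (1, nseq n.+1 0%N)] = 0.
    rewrite /dcomb big_seq1 scale1r -[RHS]F0nil /dword map_nseq mulr0n.
    by rewrite /word /Fprod; elim: n.+1 => //= j ->.
  exact: op_linear0 (op_linear_iter _ (linE d)).
have [N [Npos]] := leading_term_span sP; rewrite s0 sub0r => /in_spanN; rewrite opprK.
have c0 : (- 2%:R) ^+ n * N%:R != 0 :> C.
  by rewrite mulf_neq0 ?expf_neq0 ?oppr_eq0 ?pnatr_eq0 -?lt0n ?Npos //; exists e0.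
by move=> /(in_spanZ ((- 2%:R) ^+ n * N%:R)^-1); rewrite scalerA mulVf // scale1r.
Qed.

End LeadingTerm.

(* [phi a - H a] maps F(c) v to 2 F(a + c) v. *)
Lemma F_relation_translate a (Pc : mode -> Prop) b :
  in_span (fun y => exists c, Pc c /\ y = F c v) (F b v) ->
  in_span (fun y => exists c, Pc c /\ y = F (a + c) v) (F (a + b) v).
Proof.
pose G x := phi a *: x - H a x.
have linG : op_linear G.
  move=> c u w; rewrite /G linH scalerDr !scalerA mulrC scalerBr scalerA.
  by rewrite opprD addrACA.
have GF c : G (F c v) = 2%:R *: F (a + c) v.
  by rewrite /G HF_swap Hv (op_linearZ (linF c)) opprB addrC subrK.
have two_neq0 : (2%:R : C) != 0 by rewrite pnatr_eq0.
have -> : F (a + b) v = 2%:R^-1 *: G (F b v) by rewrite GF scalerA mulVf // scale1r.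
move=> bspan; apply/in_spanZ/(op_linear_in_span linG _ bspan) => y [c [Pc_c ->]].
by rewrite GF; apply/in_spanZ/in_span_gen; exists c.
Qed.

Definition l1norm (m : mode) : nat := \sum_(j < r) absz (m ord0 j).
Definition in_box n (m : mode) : bool := [forall j, (absz (m ord0 j) < n)%N].

Lemma l1norm_lt (m a : mode) j : (forall k, k != j -> a ord0 k = m ord0 k) ->
  (absz (a ord0 j) < absz (m ord0 j))%N -> (l1norm a < l1norm m)%N.
Proof.
move=> am aj; rewrite /l1norm (bigD1 j) //= [X in (_ < X)%N](bigD1 j) //=.
by rewrite (eq_bigr (fun k => absz (m ord0 k))) ?ltn_add2r // => k /am ->.
Qed.

Lemma F_out_of_box_step n m :
  (forall d, in_span (is_lower_multiple d n) (F (d *+ n) v)) -> ~~ in_box n m ->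
  in_span (fun y => exists c, (l1norm c < l1norm m)%N /\ y = F c v) (F m v).
Proof.
move=> rel; rewrite /in_box negb_forall => /existsP [j]; rewrite -leqNgt => mj.
pose d : mode := if (0 <= m ord0 j)%R then delta_mx ord0 j else - delta_mx ord0 j.
have d_off k : k != j -> d ord0 k = 0.
  by move=> kj; rewrite /d; case: ifP; rewrite ?mxE /= (negbTE kj) ?oppr0.
have d_on : d ord0 j = if (0 <= m ord0 j)%R then 1 else -1.
  by rewrite /d; case: ifP; rewrite ?mxE /= eqxx.
pose a := m - d *+ n.
rewrite [in F m v](_ : m = a + d *+ n); last by rewrite /a subrK.
pose multiple c := exists2 i, (i < n)%N & c = d *+ i.
apply: in_span_trans (F_relation_translate a (Pc := multiple) _).
  move=> y [c [[i ilt ->] ->]]; apply: in_span_gen; exists (a + d *+ i); split => //.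
  have entry k : (a + d *+ i) ord0 k = m ord0 k - d ord0 k *+ n + d ord0 k *+ i.
    by rewrite !mxE !mulmxnE.
  apply: (@l1norm_lt m _ j) => [k kj|]; first by rewrite entry d_off // !mul0rn subr0 addr0.
  by rewrite entry d_on; case: ifP => m0; rewrite ?mulNrn -?pmulrn; lia.
by apply: in_span_sub (rel d) => y [i [ilt ->]]; exists (d *+ i); split => //; exists i.
Qed.

Lemma F_in_span_box n : (forall d, in_span (is_lower_multiple d n) (F (d *+ n) v)) ->
  forall m, in_span (fun y => exists c, in_box n c /\ y = F c v) (F m v).
Proof.
move=> rel m; elim: {m}(l1norm m).+1 {-2}m (ltnSn (l1norm m)) => // B IH m mB.
have [inm|outm] := boolP (in_box n m); first by apply: in_span_gen; exists m.
apply: in_span_trans (F_out_of_box_step rel outm) => y [c [cm ->]].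
by apply: IH; exact: leq_trans cm mB.
Qed.

Definition box_seq n : seq mode :=
  [seq \row_(k < r) ((f k : nat)%:Z - n%:Z) | f : {ffun 'I_r -> 'I_(2 * n)}].

Lemma mem_box_seq n c : in_box n c -> c \in box_seq n.
Proof.
move=> /forallP cbox.
have shift k : (absz (c ord0 k + n%:Z)%R < 2 * n)%N by have := cbox k; lia.
apply/imageP; exists [ffun k => Ordinal (shift k)] => //.
by apply/rowP => k; have := cbox k; rewrite !mxE ffunE /= (ord1 ord0); lia.
Qed.

Lemma F_iter_F a c k x : F a (iter k (F c) x) = iter k (F c) (F a x).
Proof. by elim: k => //= k <-; rewrite FF_swap. Qed.

Lemma iter_F_Fprod c k l x : iter k (F c) (Fprod l x) = Fprod l (iter k (F c) x).
Proof. by elim: l => //= m l <-; rewrite F_iter_F. Qed.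

Lemma word_count_mem c l :
  word l = iter (count_mem c l) (F c) (word (filter (predC1 c) l)).
Proof.
elim: l => [//|a l IH]; rewrite /word /= -/(word l) IH.
by case: (eqVneq a c) => [->|ac] //=; rewrite add0n F_iter_F.
Qed.

(* The F(c) commute, so a word in letters from [S] is a monomial in them; the
   exponent of F(c) can be taken below the nilpotency index of F(c) on v. *)
Lemma words_finite_span (Fnil : forall c, exists N, iter N (F c) v = 0) (S : seq mode) :
  exists Ls : seq (seq mode), forall l, all (fun x => x \in S) l ->
    in_span (fun y => exists l', l' \in Ls /\ y = word l') (word l).
Proof.
elim: S => [|c S [Ls LsP]].
  exists [:: [::]] => -[_|//].
  by apply: in_span_gen; exists [::]; rewrite mem_head.
have [N cN] := Fnil c.
exists [seq l' ++ nseq k c | l' <- Ls, k <- iota 0 N] => l lS.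
rewrite (word_count_mem c l).
have l'S : all (fun x => x \in S) (filter (predC1 c) l).
  rewrite all_filter; apply/allP => x xl; apply/implyP => /= xc.
  by move/allP: lS => /(_ x xl); rewrite inE (negbTE xc).
apply: op_linear_in_span (LsP _ l'S); first exact: op_linear_iter.
move=> y [l' [l'Ls ->]]; rewrite /word iter_F_Fprod.
have [cnt_lt|cnt_ge] := ltnP (count_mem c l) N.
  apply: in_span_gen; exists (l' ++ nseq (count_mem c l) c); split.
    by apply: allpairs_f => //; rewrite mem_iota.
  by rewrite /word /Fprod foldr_cat; congr foldr; elim: (count_mem c l) => //= k ->.
rewrite -(subnK cnt_ge) iterD cN (op_linear0 (op_linear_iter _ (linF c))).
by rewrite (op_linear0 (op_linear_Fprod l')); apply: in_span0.
Qed.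

Lemma words_in_span_box_words (S : seq mode) :
  (forall m, in_span (fun y => exists c, c \in S /\ y = F c v) (F m v)) ->
  forall l, in_span (fun y => exists l', all (fun x => x \in S) l' /\ y = word l') (word l).
Proof.
move=> FS; elim => [|m l IH]; first by apply: in_span_gen; exists [::].
apply: op_linear_in_span IH => // y [l' [l'S ->]].
have -> : F m (word l') = Fprod l' (F m v) by rewrite /word -(iter_F_Fprod m 1).
apply: op_linear_in_span (op_linear_Fprod l') _ (FS m) => z [c [cS ->]].
apply: in_span_gen; exists (l' ++ [:: c]); split; first by rewrite all_cat l'S /= cS.
by rewrite /word /Fprod foldr_cat.
Qed.

Section Irreducible.
Hypothesis v_neq0 : v != 0.
Hypothesis irrV : is_irreducible E F H.

(* The span of the words is a nonzero submodule. *)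
Lemma words_span x : in_span is_word x.
Proof.
have word_len_word k y : is_word_len k y -> is_word y by move=> [l [_ ->]]; exists l.
have sub : is_submodule E F H (in_span is_word).
  split; [exact: in_span0 | exact: in_spanD | exact: in_spanZ |].
  move=> m u Pu; split; apply: op_linear_in_span Pu => // y [l ->].
  - exact: in_span_sub (word_len_word _) (E_word m l).
  - by apply: in_span_gen; exists (m :: l).
  - exact: in_span_sub (word_len_word _) (H_word m l).
case: (irrV.2 _ sub) => [word0|//].
by move: v_neq0; rewrite (word0 v) ?eqxx //; apply: in_span_gen; exists [::].
Qed.

Lemma H0_semisimple : acts_semisimply (H 0).
Proof.
move=> x; have [s [Ps ->]] := words_span x.
elim: s Ps => [|e s IH] Ps; first by exists [::]; rewrite !big_nil.
rewrite big_cons; have [s' [-> s'P]] : exists s' : seq (C * V), \sum_(e <- s) e.1 *: e.2 =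
    \sum_(x <- s') x.2 /\ all (fun x => H 0 x.2 == x.1 *: x.2) s'.
  by apply: IH => f fs; apply: Ps; rewrite inE fs orbT.
have [l El] := Ps e (mem_head _ _).
exists ((weight (size l), e.1 *: e.2) :: s'); rewrite big_cons; split => //=.
by rewrite s'P andbT El (op_linearZ (linH 0)) H0_word !scalerA mulrC.
Qed.

Lemma E_locally_nilpotent s : locally_nilpotent (act E s).
Proof.
move=> x; apply: nilpotent_in_span (words_span x); first exact: op_linear_act.
move=> y [l ->]; exists (size l).+1.
by apply/iter_E_word_len/in_span_gen; exists l.
Qed.

Lemma words_span_len_in (t : seq V) :
  exists Ks, forall y, y \in t -> in_span (is_word_len_in Ks) y.
Proof.
have len_in Ks Ks' y : {subset Ks <= Ks'} ->
    in_span (is_word_len_in Ks) y -> in_span (is_word_len_in Ks') y.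
  by move=> sKs; apply: in_span_sub => z [l [/sKs Kl ->]]; exists l.
have word_len_in x : exists Ks, in_span (is_word_len_in Ks) x.
  have [s [Ps ->]] := words_span x; elim: s Ps => [|e s IH] Ps.
    by exists [::]; rewrite big_nil; apply: in_span0.
  have [Ks PKs] : exists Ks, in_span (is_word_len_in Ks) (\sum_(e <- s) e.1 *: e.2).
    by apply: IH => f fs; apply: Ps; rewrite inE fs orbT.
  have [l El] := Ps e (mem_head _ _).
  exists (size l :: Ks); rewrite big_cons; apply: in_spanD.
    by apply/in_spanZ/in_span_gen; exists l; rewrite mem_head.
  by apply: len_in PKs => k kKs; rewrite inE kKs orbT.
elim: t => [|y0 t [Ks PKs]]; first by exists [::].
have [Ks0 PKs0] := word_len_in y0.
exists (Ks0 ++ Ks) => y; rewrite inE => /orP [/eqP ->|yt].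
  by apply: len_in PKs0 => k; rewrite mem_cat => ->.
by apply: len_in (PKs _ yt) => k; rewrite mem_cat => ->; rewrite orbT.
Qed.

Lemma long_words_vanish : finite_dim V ->
  exists K, forall l, (K < size l)%N -> word l = 0.
Proof.
move=> [t tP]; have [Ks PKs] := words_span_len_in t.
exists (\max_(j <- Ks) j) => l Kl.
have lKs : size l \notin Ks.
  apply/negP => lKs; have := leq_bigmax_seq (P := predT) (F := fun j => j) _ lKs isT.
  by rewrite leqNgt Kl.
have : weight_annihilator Ks (word l) = 0.
  have [c ->] := tP (word l).
  apply: (in_span_eq0 (P := fun z => z = 0)) => //.
  apply: op_linear_in_span (op_linear_weight_annihilator Ks) _ _; last first.
    by apply: in_span_sum => i _; apply/in_spanZ/PKs/mem_nth.
  move=> y [l' [l'Ks ->]]; apply: in_span_gen.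
  by rewrite weight_annihilator_word (big_rem _ l'Ks) /= subrr mul0r scale0r.
have prod_neq0 : \prod_(j <- Ks) (weight (size l) - weight j) != 0.
  rewrite prodf_seq_neq0; apply/allP => j jKs /=; apply: weight_inj => jl.
  by move: lKs; rewrite -jl jKs.
by rewrite weight_annihilator_word => /eqP; rewrite scaler_eq0 (negbTE prod_neq0) => /eqP.
Qed.

Lemma F_locally_nilpotent s : finite_dim V -> locally_nilpotent (act F s).
Proof.
move=> /long_words_vanish [K Kvanish] x.
apply: nilpotent_in_span (words_span x); first exact: op_linear_act.
move=> y [l ->]; exists K.+1.
have /(iter_F_word_len s K.+1) : in_span (is_word_len (size l)) (word l).
  by apply: in_span_gen; exists l.
apply: in_span_eq0 => z [l' [l'K ->]]; apply: Kvanish.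
by rewrite l'K ltn_addl.
Qed.

Lemma integrable_finite_dim : is_integrable E F H -> finite_dim V.
Proof.
move=> [_ _ Fnil_act].
have Fnil c : exists N, iter N (F c) v = 0.
  have [N Nnil] := Fnil_act [:: (1, c)] v; exists N; rewrite -Nnil; apply: eq_iter => x.
  by rewrite /act big_seq1 scale1r.
have [[|n] F0n] := Fnil 0; first by rewrite /= in F0n; move: v_neq0; rewrite F0n eqxx.
have Fbox m : in_span (fun y => exists c, c \in box_seq n /\ y = F c v) (F m v).
  apply: in_span_sub (F_in_span_box (fun d => F_multiple_relation d F0n) m).
  by move=> y [c [cbox ->]]; exists c; rewrite mem_box_seq.
have [Ls LsP] := words_finite_span Fnil (box_seq n).
exists (map word Ls) => x; apply: in_span_seq.
apply: in_span_trans (words_span x) => _ [l ->].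
apply: in_span_trans (words_in_span_box_words Fbox l) => _ [l' [l'box ->]].
by apply: in_span_sub (LsP l' l'box) => _ [l'' [l''Ls ->]]; exact: map_f.
Qed.

Lemma finite_dim_integrable : finite_dim V -> is_integrable E F H.
Proof.
move=> fdV; split; [exact: H0_semisimple | exact: E_locally_nilpotent |].
by move=> s; exact: F_locally_nilpotent.
Qed.

End Irreducible.

End HighestWeight.

(* The argument works for every [r]. *)
Theorem proposition5p3 (R : realType) (r : nat) (hr : (0 < r)%N)
  (phi : 'rV[int]_r -> R[i]) (V : lmodType R[i])
  (E F H : 'rV[int]_r -> V -> V) :
  is_loop_sl2_module E F H ->
  is_irreducible E F H ->
  (exists v : V, is_hw_vector E H phi v) ->
  (is_integrable E F H <-> finite_dim V).
Proof.
move=> [linE [linF [linH [commEF [_ [commHF [_ [commFF _]]]]]]]] irrV [v [v_neq0 vP]].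
have Ev m : E m v = 0 by have [] := vP m.
have Hv m : H m v = phi m *: v by have [] := vP m.
split; [exact: integrable_finite_dim | exact: finite_dim_integrable].
Qed.
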